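(* Let $b>0$ and $\beta>0$. Let $X$ be the set of all $\gamma\in C([0,b])$ which are continuously differentiable on $(0,b]$, with $\gamma(t)>0$ for all $t\in(0,b]$, $\gamma(0)=0$, $\gamma(b)=\beta$, and such that the improper integral $$\mathcal{L}(\gamma)=\int_0^b\left(\frac{1+\gamma'(t)^2}{\gamma(t)}\right)^{1/2}dt$$ is defined (finite). Let $\gamma$ be a minimum of $\mathcal{L}$ on $X$. Then: (a) $\lim_{t\to 0^+}\gamma'(t)=\infty$; (b) $\gamma$ is not constant on any interval; (c) $\gamma$ has at most one critical point, which is a maximum; (d) $\gamma$ is either strictly increasing, or is strictly increasing, reaches a maximum and then is strictly decreasing; (e) $\gamma'$ is strictly decreasing on $(0,b)$. *)

From Stdlib Require Import Reals.
From Coquelicot Require Export Coquelicot.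
Open Scope R_scope.

Definition C1_on_0b (b : R) (g : R -> R) : Prop :=
  exists dg : R -> R,
    (forall t, 0 < t < b -> is_derive g t (dg t)) /\
    filterlim (fun t => (g t - g b) / (t - b)) (at_left b) (locally (dg b)) /\
    continuous_on (fun t => 0 < t <= b) dg.

Definition Lintegrand (g : R -> R) (t : R) : R :=
  sqrt ((1 + (Derive g t) ^ 2) / g t).

Definition L_is (b : R) (g : R -> R) (l : R) : Prop :=
  is_RInt_gen (Lintegrand g) (at_right 0) (at_point b) l.

Definition inX (b beta : R) (g : R -> R) : Prop :=
  continuous_on (fun t => 0 <= t <= b) g /\
  C1_on_0b b g /\
  (forall t, 0 < t <= b -> 0 < g t) /\
  g 0 = 0 /\ g b = beta /\
  exists l, L_is b g l.

Definition is_minimizer (b beta : R) (g : R -> R) : Prop :=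
  inX b beta g /\
  exists l, L_is b g l /\
    forall h m, inX b beta h -> L_is b h m -> l <= m.

Definition strictly_increasing_on (a c : R) (g : R -> R) : Prop :=
  forall s t, a <= s -> s < t -> t <= c -> g s < g t.

Definition strictly_decreasing_on (a c : R) (g : R -> R) : Prop :=
  forall s t, a <= s -> s < t -> t <= c -> g t < g s.

From Stdlib Require Import Reals Lra Classical_Prop Ranalysis5.
From Coquelicot Require Import Coquelicot.
Open Scope R_scope.

(* A minimizer is stationary under the perturbations [g + u phi], [phi] a test function
   supported in a compact subinterval of (0, b).  Differentiating under the integral sign gives
   the weak Euler-Lagrange equation for the Lagrangian [F y p = sqrt ((1 + p^2) / y)], and the
   lemma of du Bois-Reymond turns it into [(F_p (g, g'))' = F_y (g, g')] on (0, b), although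
   [g'] is only known to be continuous.  For [q = g' / sqrt (1 + g'^2) = sqrt g * F_p (g, g')]
   this gives [q' = - 1 / (2 g sqrt (1 + g'^2)) < 0], so [g'] is strictly decreasing, and the
   first integral [g (1 + g'^2) = c > 0].  Since [g 0 = 0], [g'^2] blows up at 0, so [g'] tends
   to [+oo]; the shape of [g] then follows from the intermediate value theorem applied to the
   decreasing derivative. *)

Lemma locally_between (a b t : R) : a < t < b -> locally t (fun x => a < x < b).
Proof. apply (open_and (fun x => a < x) (fun x => x < b)); [apply open_gt|apply open_lt]. Qed.

Lemma locally_R (x : R) (P : R -> Prop) :
  locally x P -> exists d, 0 < d /\ forall y, Rabs (y - x) < d -> P y.
Proof. intros [e He]. exists e. split; [apply cond_pos|exact He]. Qed.

Lemma continuous_locally_close (f : R -> R) x eta : 0 < eta -> continuous f x ->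
  locally x (fun y => Rabs (f y - f x) < eta).
Proof.
intros Heta Hf.
apply (Hf (fun z => Rabs (z - f x) < eta)), (locally_ball (f x) (mkposreal eta Heta)).
Qed.

Lemma at_right_between (a c : R) : a < c -> at_right a (fun x => a < x < c).
Proof.
intros Hac. unfold at_right, within.
apply (filter_imp (fun x => 2 * a - c < x < c)); [intros x Hx Hx0; lra|apply locally_between; lra].
Qed.

Lemma continuous_on_subinterval (f : R -> R) a b s t : a <= s -> t <= b ->
  continuous_on (fun x => a <= x <= b) f -> continuous_on (fun x => s <= x <= t) f.
Proof. intros Has Htb. apply continuous_on_subset. intros x Hx. lra. Qed.

Lemma continuous_on_near (D : R -> Prop) (f : R -> R) x eps : 0 < eps -> D x ->
  continuous_on D f ->
  exists d, 0 < d /\ forall u, D u -> Rabs (u - x) < d -> Rabs (f u - f x) < eps.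
Proof.
intros He Hx Hf.
destruct (locally_R x _ (Hf x Hx _ (locally_ball (f x) (mkposreal eps He)))) as [d [Hd Hnear]].
exists d. split; [exact Hd|]. intros u Hu Hux. exact (Hnear u Hux Hu).
Qed.

Lemma continuous_on_plus_continuous (D : R -> Prop) (f k : R -> R) :
  continuous_on D f -> (forall x, continuous k x) -> continuous_on D (fun x => f x + k x).
Proof.
intros Hf Hk x Hx.
apply (filterlim_comp_2 (G := locally (f x)) (H := locally (k x)) f k Rplus (Hf x Hx)).
- intros P HP. unfold filtermap, within.
  apply (filter_imp (fun y => P (k y))); [auto|exact (Hk x P HP)].
- apply (filterlim_plus (f x) (k x)).
Qed.

Lemma continuity_2d_pt_snd (f : R -> R) u v : continuous f v ->
  continuity_2d_pt (fun _ y => f y) u v.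
Proof.
intros Hf. apply (continuity_1d_2d_pt_comp f (fun _ y => y)).
- apply continuity_pt_filterlim, Hf.
- apply continuity_2d_pt_id2.
Qed.

Lemma continuity_2d_pt_line (f k : R -> R) u v : continuous f v -> continuous k v ->
  continuity_2d_pt (fun x y => f y + x * k y) u v.
Proof.
intros Hf Hk. apply continuity_2d_pt_plus; [apply continuity_2d_pt_snd, Hf|].
apply continuity_2d_pt_mult; [apply continuity_2d_pt_id1|apply continuity_2d_pt_snd, Hk].
Qed.

Lemma continuity_2d_pt_pos (f : R -> R -> R) u v : continuity_2d_pt f u v -> 0 < f u v ->
  locally_2d (fun x y => 0 < f x y) u v.
Proof.
intros Hf Hp. destruct (Hf (mkposreal _ Hp)) as [d Hd]. exists d. intros x y Hx Hy.
specialize (Hd x y Hx Hy). simpl in Hd. apply Rabs_lt_between in Hd. lra.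
Qed.

Lemma continuity_2d_pt_comp (F f h : R -> R -> R) u v :
  continuity_2d_pt F (f u v) (h u v) -> continuity_2d_pt f u v -> continuity_2d_pt h u v ->
  continuity_2d_pt (fun x y => F (f x y) (h x y)) u v.
Proof.
rewrite !continuity_2d_pt_filterlim. intros HF Hf Hh.
exact (continuous_comp_2 (fun z => f (fst z) (snd z)) (fun z => h (fst z) (snd z))
  (fun a c => F a c) (u, v) Hf Hh HF).
Qed.

Lemma continuous_comp_2d (F : R -> R -> R) (f h : R -> R) x :
  continuous f x -> continuous h x -> continuity_2d_pt F (f x) (h x) ->
  continuous (fun y => F (f y) (h y)) x.
Proof.
intros Hf Hh HF. apply (continuous_comp_2 f h F x Hf Hh).
apply continuity_2d_pt_filterlim, HF.
Qed.

Lemma is_derive_local_min (f : R -> R) x l e : 0 < e -> is_derive f x l ->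
  (forall y, Rabs (y - x) < e -> f x <= f y) -> l = 0.
Proof.
intros He Hd Hmin.
assert (Hp : derivable_pt f x) by (apply ex_derive_Reals_0; exists l; exact Hd).
rewrite <- (derive_pt_eq_0 f x l Hp (proj1 (is_derive_Reals f x l) Hd)).
apply (deriv_minimum f (x - e) (x + e) x Hp); try lra.
intros y H1 H2. apply Hmin, Rabs_def1; lra.
Qed.

Lemma is_derive_zero_const (f : R -> R) a b : (forall x, a < x < b -> is_derive f x 0) ->
  forall s t, a < s < b -> a < t < b -> f s = f t.
Proof.
intros Hd.
assert (Hle : forall s t, a < s < b -> a < t < b -> s <= t -> f s = f t).
{ intros s t Hs Ht Hst.
  destruct (MVT_gen f s t (fun _ => 0)) as (c & _ & Hc);
    rewrite ?Rmin_left, ?Rmax_right by lra.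
  - intros x Hx. apply Hd. lra.
  - intros x Hx. apply continuity_pt_filterlim, (ex_derive_continuous f). exists 0. apply Hd. lra.
  - lra. }
intros s t Hs Ht. destruct (Rle_or_lt s t); [auto|symmetry; apply Hle; auto; lra].
Qed.

Lemma strictly_increasing_on_derive (f df : R -> R) s t : s < t ->
  continuous_on (fun x => s <= x <= t) f ->
  (forall x, s < x < t -> is_derive f x (df x)) -> (forall x, s < x < t -> 0 < df x) ->
  strictly_increasing_on s t f.
Proof.
intros Hst Hc Hd Hp x y Hx Hxy Hy.
assert (Hinc : forall u v, s < u -> u < v -> v < t -> f u < f v).
{ intros u v Hu Huv Hv. apply (incr_function f s t df); try (simpl; lra).
  - intros z Hz1 Hz2. apply Hd. simpl in *. lra.
  - intros z Hz1 Hz2. apply Hp. simpl in *. lra. }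
set (x1 := x + (y - x) / 3). set (y1 := y - (y - x) / 3).
set (eta := (f y1 - f x1) / 2).
assert (Heta : 0 < eta).
{ assert (f x1 < f y1) by (apply Hinc; unfold x1, y1; lra). unfold eta. lra. }
destruct (continuous_on_near (fun z => s <= z <= t) f x eta Heta ltac:(lra) Hc) as (d1 & Hd1 & Hn1).
destruct (continuous_on_near (fun z => s <= z <= t) f y eta Heta ltac:(lra) Hc) as (d2 & Hd2 & Hn2).
set (r := Rmin (Rmin d1 d2) ((y - x) / 3) / 2).
assert (Hr : 0 < r /\ r < d1 /\ r < d2 /\ r < (y - x) / 3).
{ assert (0 < Rmin (Rmin d1 d2) ((y - x) / 3)) by (repeat apply Rmin_glb_lt; lra).
  pose proof (Rmin_l (Rmin d1 d2) ((y - x) / 3)). pose proof (Rmin_r (Rmin d1 d2) ((y - x) / 3)).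
  pose proof (Rmin_l d1 d2). pose proof (Rmin_r d1 d2). unfold r. lra. }
assert (A1 : Rabs (f (x + r) - f x) < eta) by (apply Hn1; [|rewrite Rabs_pos_eq]; lra).
assert (A2 : Rabs (f (y - r) - f y) < eta) by (apply Hn2; [|rewrite Rabs_left]; lra).
apply Rabs_lt_between in A1. apply Rabs_lt_between in A2.
assert (B1 : f (x + r) < f x1) by (apply Hinc; unfold x1; lra).
assert (B2 : f y1 < f (y - r)) by (apply Hinc; unfold y1; lra).
unfold eta in *. lra.
Qed.

Lemma strictly_decreasing_on_derive (f df : R -> R) s t : s < t ->
  continuous_on (fun x => s <= x <= t) f ->
  (forall x, s < x < t -> is_derive f x (df x)) -> (forall x, s < x < t -> df x < 0) ->
  strictly_decreasing_on s t f.
Proof.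
intros Hst Hc Hd Hn x y Hx Hxy Hy. apply Ropp_lt_cancel.
apply (strictly_increasing_on_derive (fun x => - f x) (fun x => - df x) s t); auto.
- intros z Hz. eapply filterlim_comp; [exact (Hc z Hz)|apply (filterlim_opp (f z))].
- intros z Hz. apply (is_derive_opp f), Hd, Hz.
- intros z Hz. specialize (Hn z Hz). lra.
Qed.

Lemma exists_pos_perturbation (f k : R -> R) s t : s <= t ->
  (forall x, s <= x <= t -> continuous f x /\ continuous k x) ->
  (forall x, s <= x <= t -> 0 < f x) ->
  exists e, 0 < e /\ forall u x, Rabs u < e -> s <= x <= t -> 0 < f x + u * k x.
Proof.
intros Hst Hc Hpos.
destruct (continuity_ab_min f s t Hst) as (xm & Hxm & Hxm').
{ intros x Hx. apply continuity_pt_filterlim, Hc, Hx. }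
destruct (continuity_ab_maj (fun x => Rabs (k x)) s t Hst) as (xM & HxM & HxM').
{ intros x Hx. apply continuity_pt_filterlim, continuous_Rabs_comp, Hc, Hx. }
set (m := f xm) in *. set (M := Rabs (k xM)) in *.
assert (Hm : 0 < m) by (apply Hpos, Hxm').
assert (HM : 0 <= M) by apply Rabs_pos.
exists (m / (M + 1)). split; [apply Rdiv_lt_0_compat; lra|].
intros u x Hu Hx.
assert (HuM : Rabs u * M < m).
{ apply (Rle_lt_trans _ (m / (M + 1) * M)); [apply Rmult_le_compat_r; lra|].
  apply (Rmult_lt_reg_r (M + 1)); [lra|]. field_simplify; nra. }
assert (Hk : Rabs (u * k x) <= Rabs u * M)
  by (rewrite Rabs_mult; apply Rmult_le_compat_l; [apply Rabs_pos|apply HxM, Hx]).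
pose proof (Hxm x Hx). pose proof (Rle_abs (- (u * k x))). rewrite Rabs_Ropp in *. lra.
Qed.

Lemma ex_RInt_R (f : R -> R) a b :
  (forall x, Rmin a b <= x <= Rmax a b -> continuous f x) -> ex_RInt f a b.
Proof. apply (ex_RInt_continuous (V := R_CompleteNormedModule)). Qed.

Lemma RInt_ext_R (f h : R -> R) a b :
  (forall x, Rmin a b < x < Rmax a b -> f x = h x) -> RInt f a b = RInt h a b.
Proof. apply (RInt_ext (V := R_CompleteNormedModule)). Qed.

Lemma RInt_minus_R (f h : R -> R) a b : ex_RInt f a b -> ex_RInt h a b ->
  RInt (fun x => f x - h x) a b = RInt f a b - RInt h a b.
Proof. apply (RInt_minus (V := R_CompleteNormedModule)). Qed.

Lemma RInt_scal_R (f : R -> R) a b c : ex_RInt f a b ->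
  RInt (fun x => c * f x) a b = c * RInt f a b.
Proof. apply (RInt_scal (V := R_CompleteNormedModule)). Qed.

Lemma RInt_Chasles_R (f : R -> R) a b c : ex_RInt f a b -> ex_RInt f b c ->
  RInt f a b + RInt f b c = RInt f a c.
Proof. apply (RInt_Chasles (V := R_CompleteNormedModule)). Qed.

Lemma RInt_vanishing (f : R -> R) a b :
  (forall x, Rmin a b < x < Rmax a b -> f x = 0) -> RInt f a b = 0.
Proof.
intros Hf. rewrite (RInt_ext_R f (fun _ => 0)) by exact Hf.
rewrite RInt_const. apply Rmult_0_r.
Qed.

Lemma is_RInt_supported (f : R -> R) a s t c : a <= s -> s <= t -> t <= c ->
  (forall x, x <= s \/ t <= x -> f x = 0) -> ex_RInt f s t -> is_RInt f a c (RInt f s t).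
Proof.
intros Has Hst Htc Hout Hex.
assert (Hzero : forall p q, (forall x, p < x < q -> f x = 0) -> p <= q -> is_RInt f p q 0).
{ intros p q Hpq Hle. apply (is_RInt_ext (fun _ => 0)).
  - intros x Hx. rewrite Rmin_left, Rmax_right in Hx by lra. symmetry. apply Hpq, Hx.
  - pose proof (is_RInt_const p q 0) as H.
    change (is_RInt (fun _ => 0) p q ((q - p) * 0)) in H. rewrite Rmult_0_r in H. exact H. }
rewrite <- (Rplus_0_l (RInt f s t)), <- (Rplus_0_r (0 + RInt f s t)).
apply (is_RInt_Chasles f a t c); [apply (is_RInt_Chasles f a s t)|].
- apply Hzero; [intros; apply Hout; lra|lra].
- apply (RInt_correct (V := R_CompleteNormedModule)), Hex.
- apply Hzero; [intros; apply Hout; lra|lra].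
Qed.

Lemma is_RInt_gen_eventually (f : R -> R) Fa Fb l : Filter Fa -> Filter Fb ->
  filter_prod Fa Fb (fun ab => is_RInt f (fst ab) (snd ab) l) -> is_RInt_gen f Fa Fb l.
Proof.
intros HFa HFb H P HP. unfold filtermapi.
apply (filter_imp (fun ab => is_RInt f (fst ab) (snd ab) l)); [|exact H].
intros ab Hab. exists l. split; [exact Hab|apply locally_singleton, HP].
Qed.

Lemma RInt_weight_near (H w : R -> R) lo hi k eta : lo <= hi ->
  (forall x, lo <= x <= hi -> continuous H x /\ continuous w x) ->
  (forall x, lo < x < hi -> 0 <= w x) ->
  (forall x, lo < x < hi -> 0 < w x -> Rabs (H x - k) <= eta) ->
  Rabs (RInt (fun x => H x * w x) lo hi - k * RInt w lo hi) <= eta * RInt w lo hi.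
Proof.
intros Hlh Hc Hw Hk.
assert (Hex : forall f : R -> R, (forall x, lo <= x <= hi -> continuous f x) -> ex_RInt f lo hi).
{ intros f Hf; apply ex_RInt_R; rewrite Rmin_left, Rmax_right by lra; exact Hf. }
assert (Hcw : forall x, lo <= x <= hi -> continuous w x) by (intros; apply Hc; lra).
assert (Hcd : forall x, lo <= x <= hi -> continuous (fun x => (H x - k) * w x) x).
{ intros x Hx; apply (continuous_mult (fun x => H x - k) w);
    [apply (continuous_minus H (fun _ => k)); [apply Hc|apply continuous_const]|]; auto. }
assert (E : RInt (fun x => H x * w x) lo hi - k * RInt w lo hi
  = RInt (fun x => (H x - k) * w x) lo hi).
{ rewrite <- RInt_scal_R, <- RInt_minus_R.
  - apply RInt_ext; intros; symmetry; apply Rmult_minus_distr_r.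
  - apply Hex; intros; apply (continuous_mult H w); apply Hc; lra.
  - apply Hex; intros; apply (continuous_mult (fun _ => k) w); [apply continuous_const|auto].
  - apply Hex; auto. }
rewrite E, <- RInt_scal_R by (apply Hex; auto).
eapply Rle_trans; [apply abs_RInt_le; auto|].
apply RInt_le; auto.
- apply Hex; intros x Hx. apply (continuous_comp _ Rabs); auto. apply continuous_Rabs.
- apply Hex; intros x Hx. apply (continuous_mult (fun _ => eta) w); auto. apply continuous_const.
- intros x Hx. rewrite Rabs_mult, (Rabs_pos_eq (w x)) by auto.
  destruct (Hw x Hx) as [Hpos|Hz]; [|rewrite <- Hz; lra].
  apply Rmult_le_compat_r; auto with real.
Qed.

(** * The lemma of du Bois-Reymond *)

Definition test_fun (s t : R) (phi dphi : R -> R) : Prop :=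
  (forall x, is_derive phi x (dphi x)) /\ (forall x, continuous dphi x) /\
  (forall x, x <= s \/ t <= x -> phi x = 0 /\ dphi x = 0).

Definition tent (d c x : R) : R := Rmax 0 (d - Rabs (x - c)).

Lemma continuous_tent d c x : continuous (tent d c) x.
Proof.
apply (continuous_ext (fun y => (d - Rabs (y - c) + Rabs (d - Rabs (y - c))) / 2)).
{ intros y; unfold tent, Rmax; destruct Rle_dec.
  - rewrite (Rabs_pos_eq (d - Rabs (y - c))); lra.
  - rewrite (Rabs_left (d - Rabs (y - c))); lra. }
apply continuity_pt_filterlim. reg.
Qed.

Lemma tent_ge0 d c x : 0 <= tent d c x.
Proof. apply Rmax_l. Qed.

Lemma tent_out d c x : d <= Rabs (x - c) -> tent d c x = 0.
Proof. intros H. apply Rmax_left. lra. Qed.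

Lemma tent_gt0 d c x : 0 < tent d c x -> Rabs (x - c) < d.
Proof. intros H. destruct (Rlt_or_le (Rabs (x - c)) d); auto. rewrite tent_out in H; lra. Qed.

Lemma RInt_tent_gt0 d c lo hi : 0 < d -> lo <= c - d -> c + d <= hi -> 0 < RInt (tent d c) lo hi.
Proof.
intros Hd Hlo Hhi.
assert (Hex : forall a b, ex_RInt (tent d c) a b)
  by (intros; apply ex_RInt_R; intros; apply continuous_tent).
rewrite <- (RInt_Chasles_R _ lo (c - d) hi), <- (RInt_Chasles_R _ (c - d) (c + d) hi) by auto.
rewrite (RInt_vanishing _ lo), (RInt_vanishing _ (c + d) hi).
2, 3: intros x Hx; apply tent_out; rewrite ?Rmin_left, ?Rmax_right in Hx by lra;
  unfold Rabs; destruct Rcase_abs; lra.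
assert (0 < RInt (tent d c) (c - d) (c + d)); [|lra].
apply RInt_gt_0; [lra| |intros; apply continuous_tent].
intros x Hx. unfold tent. rewrite Rmax_right; [|unfold Rabs; destruct Rcase_abs; lra].
unfold Rabs; destruct Rcase_abs; lra.
Qed.

Lemma test_fun_primitive (psi : R -> R) lo hi : lo <= hi ->
  (forall x, continuous psi x) -> (forall x, x <= lo \/ hi <= x -> psi x = 0) ->
  RInt psi lo hi = 0 -> test_fun lo hi (fun x => RInt psi lo x) psi.
Proof.
intros Hlh Hc Hout Hint.
assert (Hex : forall a b, ex_RInt psi a b) by (intros; apply ex_RInt_R; auto).
split; [|split; [exact Hc|]].
- intros x. apply (is_derive_RInt psi _ lo); [|apply Hc].
  apply filter_forall; intros y. apply (RInt_correct (V := R_CompleteNormedModule)), Hex.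
- intros x Hx. split; [|apply Hout, Hx]. destruct Hx as [Hx|Hx].
  + apply RInt_vanishing. intros y Hy. rewrite Rmin_right, Rmax_left in Hy by lra. apply Hout. lra.
  + rewrite <- (RInt_Chasles_R _ lo hi x), Hint by auto.
    rewrite (RInt_vanishing _ hi x); [lra|].
    intros y Hy. rewrite Rmin_left, Rmax_right in Hy by lra. apply Hout. lra.
Qed.

Lemma RInt_tent_average (H : R -> R) d c lo hi eta : 0 < d -> lo <= c - d -> c + d <= hi ->
  (forall x, lo <= x <= hi -> continuous H x) ->
  (forall x, Rabs (x - c) < d -> Rabs (H x - H c) < eta) ->
  H c - eta <= RInt (fun x => H x * tent d c x) lo hi / RInt (tent d c) lo hi <= H c + eta.
Proof.
intros Hd Hlo Hhi Hc Hnear.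
assert (HI : 0 < RInt (tent d c) lo hi) by (apply RInt_tent_gt0; lra).
assert (Hw : Rabs (RInt (fun x => H x * tent d c x) lo hi - H c * RInt (tent d c) lo hi)
               <= eta * RInt (tent d c) lo hi).
{ apply RInt_weight_near; [lra| | |].
  - intros x Hx. split; [auto|apply continuous_tent].
  - intros; apply tent_ge0.
  - intros x _ Hx. apply Rlt_le, Hnear, tent_gt0, Hx. }
apply Rabs_le_between in Hw.
set (J := RInt (fun x => H x * tent d c x) lo hi) in *. set (I := RInt (tent d c) lo hi) in *.
split; [apply (Rmult_le_reg_r I)|apply (Rmult_le_reg_r I)]; unfold Rdiv;
  rewrite ?Rmult_assoc, ?Rinv_l, ?Rmult_1_r; lra.
Qed.

(* If [H x2 < H x1], the zero-mean bump [psi] (normalized tent at [x1] minus normalized tent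
   at [x2]) would have [RInt (H * psi) > 0]. *)
Lemma du_bois_reymond_le (a b : R) (H : R -> R) :
  (forall x, a < x < b -> continuous H x) ->
  (forall s t phi dphi, a < s -> s < t -> t < b -> test_fun s t phi dphi ->
     RInt (fun x => H x * dphi x) s t = 0) ->
  forall x1 x2, a < x1 < b -> a < x2 < b -> H x1 <= H x2.
Proof.
intros Hc Horth x1 x2 Hx1 Hx2.
destruct (Rle_or_lt (H x1) (H x2)) as [|Hlt]; [easy|exfalso].
set (eta := (H x1 - H x2) / 3). assert (Heta : 0 < eta) by (unfold eta; lra).
assert (Hnear : forall c, a < c < b -> exists d, 0 < d /\ a < c - d /\ c + d < b /\
          forall x, Rabs (x - c) < d -> Rabs (H x - H c) < eta).
{ intros c Hcab.
  destruct (locally_R c _ (filter_and _ _ (continuous_locally_close H c eta Heta (Hc c Hcab))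
                                     (locally_between a b c Hcab))) as [d [Hd Hd']].
  exists (d / 2). repeat split; try lra.
  - apply (Hd' (c - d / 2)). rewrite Rabs_left; lra.
  - apply (Hd' (c + d / 2)). rewrite Rabs_pos_eq; lra.
  - intros x Hx. apply Hd'. lra. }
destruct (Hnear x1 Hx1) as (d1 & Hd1 & Ha1 & Hb1 & Hn1).
destruct (Hnear x2 Hx2) as (d2 & Hd2 & Ha2 & Hb2 & Hn2).
set (lo := Rmin (x1 - d1) (x2 - d2)). set (hi := Rmax (x1 + d1) (x2 + d2)).
assert (Hlo : a < lo /\ lo <= x1 - d1 /\ lo <= x2 - d2)
  by (unfold lo; repeat split; [apply Rmin_glb_lt|apply Rmin_l|apply Rmin_r]; lra).
assert (Hhi : hi < b /\ x1 + d1 <= hi /\ x2 + d2 <= hi)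
  by (unfold hi; repeat split; [apply Rmax_lub_lt|apply Rmax_l|apply Rmax_r]; lra).
set (I1 := RInt (tent d1 x1) lo hi). set (I2 := RInt (tent d2 x2) lo hi).
assert (HI1 : 0 < I1) by (apply RInt_tent_gt0; lra).
assert (HI2 : 0 < I2) by (apply RInt_tent_gt0; lra).
set (psi := fun x => / I1 * tent d1 x1 x - / I2 * tent d2 x2 x).
assert (Hex : forall f : R -> R, (forall x, lo <= x <= hi -> continuous f x) -> ex_RInt f lo hi).
{ intros f Hf. apply ex_RInt_R. rewrite Rmin_left, Rmax_right by lra. exact Hf. }
assert (HexT : forall d c, ex_RInt (tent d c) lo hi)
  by (intros; apply Hex; intros; apply continuous_tent).
assert (HexHT : forall d c, ex_RInt (fun x => H x * tent d c x) lo hi).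
{ intros d c. apply Hex. intros x Hx.
  apply (continuous_mult H); [apply Hc; lra|apply continuous_tent]. }
assert (Hscal : forall f : R -> R, ex_RInt f lo hi -> forall k, ex_RInt (fun x => k * f x) lo hi)
  by (intros f Hf k; apply (ex_RInt_scal (V := R_CompleteNormedModule) f lo hi k Hf)).
assert (Hpsi : RInt (fun x => H x * psi x) lo hi = 0).
{ apply (Horth lo hi (fun x => RInt psi lo x)); try lra.
  apply test_fun_primitive; [lra| | |].
  - intros x.
    apply (continuous_minus (fun x => / I1 * tent d1 x1 x) (fun x => / I2 * tent d2 x2 x));
      apply (continuous_scal_r _ (tent _ _)), continuous_tent.
  - intros x Hx. unfold psi. rewrite !tent_out; [lra| |];
      unfold Rabs; destruct Rcase_abs; destruct Hx; lra.
  (* Side conditions are dispatched by matching: unifying [tent _ _] with a product would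
     unfold the real arithmetic and not terminate in practice. *)
  - unfold psi. rewrite RInt_minus_R, !RInt_scal_R by (lazymatch goal with
      | |- ex_RInt (fun _ => _ * _) _ _ => apply Hscal, HexT | _ => apply HexT end).
    fold I1 I2. rewrite !Rinv_l by lra. apply Rminus_diag_eq; reflexivity. }
rewrite (RInt_ext_R _ (fun x => / I1 * (H x * tent d1 x1 x) - / I2 * (H x * tent d2 x2 x)))
  in Hpsi by (intros; unfold psi; ring).
rewrite RInt_minus_R, !RInt_scal_R in Hpsi by (lazymatch goal with
      | |- ex_RInt (fun _ => _ * (_ * _)) _ _ => apply Hscal, HexHT | _ => apply HexHT end).
assert (Hc' : forall x, lo <= x <= hi -> continuous H x) by (intros; apply Hc; lra).
pose proof (RInt_tent_average H d1 x1 lo hi eta Hd1 ltac:(lra) ltac:(lra) Hc' Hn1) as A1.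
pose proof (RInt_tent_average H d2 x2 lo hi eta Hd2 ltac:(lra) ltac:(lra) Hc' Hn2) as A2.
fold I1 I2 in A1, A2. unfold Rdiv in A1, A2. rewrite Rmult_comm in A1, A2.
unfold eta in *. lra.
Qed.

Lemma is_RInt_by_parts_test_fun (A K phi dphi : R -> R) s t : s < t ->
  (forall x, s <= x <= t -> is_derive K x (A x) /\ continuous A x) -> test_fun s t phi dphi ->
  is_RInt (fun x => A x * phi x + K x * dphi x) s t 0.
Proof.
intros Hst HK (Hphi & Hdphi & Hsupp).
destruct (Hsupp s (or_introl (Rle_refl s))) as [Es _].
destruct (Hsupp t (or_intror (Rle_refl t))) as [Et _].
replace 0 with (minus (scal (K t) (phi t)) (scal (K s) (phi s))).
- apply (is_RInt_scal_derive K phi A dphi s t); intros x Hx;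
    rewrite Rmin_left, Rmax_right in Hx by lra; auto; apply HK; auto.
- rewrite Es, Et. apply Rminus_diag_eq. unfold scal; simpl; unfold mult; simpl; ring.
Qed.

Lemma du_bois_reymond (a b : R) (A B : R -> R) :
  (forall x, a < x < b -> continuous A x) -> (forall x, a < x < b -> continuous B x) ->
  (forall s t phi dphi, a < s -> s < t -> t < b -> test_fun s t phi dphi ->
     RInt (fun x => A x * phi x + B x * dphi x) s t = 0) ->
  forall x, a < x < b -> is_derive B x (A x).
Proof.
intros HA HB Hweak x0 Hx0.
set (K := (fun x => RInt A x0 x) : R -> R).
assert (HK : forall x, a < x < b -> is_derive K x (A x)).
{ intros x Hx. apply (is_derive_RInt A K x0); [|apply HA, Hx].
  apply (filter_imp (fun y => a < y < b)); [|apply locally_between, Hx].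
  intros y Hy. apply (RInt_correct (V := R_CompleteNormedModule)), ex_RInt_R.
  intros z Hz. apply HA. split.
  - apply (Rlt_le_trans _ (Rmin x0 y)); [apply Rmin_glb_lt|]; lra.
  - apply (Rle_lt_trans _ (Rmax x0 y)); [|apply Rmax_lub_lt]; lra. }
assert (HcK : forall x, a < x < b -> continuous K x)
  by (intros x Hx; apply (ex_derive_continuous K); exists (A x); auto).
assert (Horth : forall s t phi dphi, a < s -> s < t -> t < b -> test_fun s t phi dphi ->
          RInt (fun x => (B x - K x) * dphi x) s t = 0).
{ intros s t phi dphi Hs Hst Ht Hphi.
  assert (Hphic : forall x, continuous phi x).
  { intros x. destruct Hphi as [Hd _]. apply (ex_derive_continuous phi). exists (dphi x). auto. }
  assert (Hex : forall f : R -> R, (forall x, a < x < b -> continuous f x) ->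
            ex_RInt (fun x => A x * phi x + f x * dphi x) s t).
  { intros f Hf. destruct Hphi as (_ & Hdc & _). apply ex_RInt_R. intros x Hx.
    rewrite Rmin_left, Rmax_right in Hx by lra.
    apply (continuous_plus (fun x => A x * phi x) (fun x => f x * dphi x));
      [apply (continuous_mult A phi)|apply (continuous_mult f dphi)]; auto;
      apply Hf || apply HA; lra. }
  rewrite (RInt_ext_R _ (fun x => (A x * phi x + B x * dphi x) - (A x * phi x + K x * dphi x)))
    by (intros; ring).
  rewrite RInt_minus_R, Hweak by auto.
  rewrite (is_RInt_unique _ _ _ _ (is_RInt_by_parts_test_fun A K phi dphi s t Hst
    (fun x Hx => conj (HK x ltac:(lra)) (HA x ltac:(lra))) Hphi)).
  apply Rminus_0_r. }
assert (Hconst : forall x, a < x < b -> B x - K x = B x0 - K x0).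
{ intros x Hx. apply Rle_antisym; apply (du_bois_reymond_le a b (fun x => B x - K x)); auto;
    intros y Hy; apply (continuous_minus B K); auto. }
apply is_derive_ext_loc with (fun x => K x + (B x0 - K x0)).
- apply (filter_imp (fun y => a < y < b)); [|apply locally_between, Hx0].
  intros y Hy. rewrite <- (Hconst y Hy). apply Rplus_minus.
- pose proof (is_derive_plus K (fun _ => B x0 - K x0) x0 _ _ (HK x0 Hx0)
    (is_derive_const (B x0 - K x0) x0)) as Hd.
  rewrite plus_zero_r in Hd. exact Hd.
Qed.

Definition lagr (y p : R) : R := sqrt ((1 + p ^ 2) / y).

Definition lagr_y (y p : R) : R := - lagr y p / (2 * y).

Definition lagr_p (y p : R) : R := p / (y * lagr y p).

Lemma lagr_pos y p : 0 < y -> 0 < lagr y p.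
Proof. intros Hy; apply sqrt_lt_R0, Rdiv_lt_0_compat; nra. Qed.

Lemma is_derive_lagr_line Y P a c u : 0 < Y + u * a ->
  is_derive (fun z => lagr (Y + z * a) (P + z * c)) u
    (lagr_y (Y + u * a) (P + u * c) * a + lagr_p (Y + u * a) (P + u * c) * c).
Proof.
intros Hy. unfold lagr_y, lagr_p, lagr. auto_derive.
- split; [lra|split; [|easy]]. apply Rdiv_lt_0_compat; [|lra].
  rewrite Rmult_1_r; apply Rplus_lt_le_0_compat; [lra|apply Rle_0_sqr].
- set (y := Y + u * a) in *. set (p := P + u * c).
  replace ((1 + p * (p * 1)) * / y) with ((1 + p ^ 2) / y) by (unfold Rdiv; ring).
  assert (Hs : 0 < sqrt ((1 + p ^ 2) / y)) by (apply sqrt_lt_R0, Rdiv_lt_0_compat; nra).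
  assert (Hss : sqrt ((1 + p ^ 2) / y) * sqrt ((1 + p ^ 2) / y) = (1 + p ^ 2) / y)
    by (apply sqrt_sqrt, Rlt_le, Rdiv_lt_0_compat; nra).
  set (s := sqrt ((1 + p ^ 2) / y)) in *.
  replace (1 + p * (p * 1)) with (s * s * y) by (rewrite Hss; field; lra).
  field; lra.
Qed.

Lemma continuity_2d_pt_lagr Y P : 0 < Y -> continuity_2d_pt lagr Y P.
Proof.
intros HY. apply (continuity_1d_2d_pt_comp sqrt (fun y p => (1 + p ^ 2) / y)).
- apply continuity_pt_sqrt, Rlt_le, Rdiv_lt_0_compat; nra.
- apply continuity_2d_pt_ext with (fun y p => (1 + p * p) * / y).
  { intros; unfold Rdiv; ring. }
  apply continuity_2d_pt_mult.
  + apply continuity_2d_pt_plus; [apply continuity_2d_pt_const|].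
    apply continuity_2d_pt_mult; apply continuity_2d_pt_id2.
  + apply continuity_2d_pt_inv; [apply continuity_2d_pt_id1|lra].
Qed.

Lemma continuity_2d_pt_lagr_y Y P : 0 < Y -> continuity_2d_pt lagr_y Y P.
Proof.
intros HY. apply continuity_2d_pt_mult.
- apply continuity_2d_pt_opp, continuity_2d_pt_lagr, HY.
- apply continuity_2d_pt_inv; [|lra].
  apply continuity_2d_pt_mult; [apply continuity_2d_pt_const|apply continuity_2d_pt_id1].
Qed.

Lemma continuity_2d_pt_lagr_p Y P : 0 < Y -> continuity_2d_pt lagr_p Y P.
Proof.
intros HY. pose proof (lagr_pos Y P HY).
apply continuity_2d_pt_mult; [apply continuity_2d_pt_id2|].
apply continuity_2d_pt_inv; [|nra].
apply continuity_2d_pt_mult; [apply continuity_2d_pt_id1|apply continuity_2d_pt_lagr, HY].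
Qed.

Lemma Lintegrand_derive (h dh : R -> R) x : is_derive h x (dh x) ->
  Lintegrand h x = lagr (h x) (dh x).
Proof.
intros Hd. unfold Lintegrand, lagr. rewrite (is_derive_unique h x (dh x) Hd). reflexivity.
Qed.

(** * First variation of a minimizer *)

Section FirstVariation.

Variables (b beta l : R) (g dg : R -> R).
Hypothesis Hb : 0 < b.
Hypothesis Hgc : continuous_on (fun t => 0 <= t <= b) g.
Hypothesis Hg : forall t, 0 < t < b -> is_derive g t (dg t).
Hypothesis Hg_left : filterlim (fun t => (g t - g b) / (t - b)) (at_left b) (locally (dg b)).
Hypothesis Hdgc : continuous_on (fun t => 0 < t <= b) dg.
Hypothesis Hpos : forall t, 0 < t <= b -> 0 < g t.
Hypothesis Hg0 : g 0 = 0.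
Hypothesis Hgb : g b = beta.
Hypothesis HL : L_is b g l.
Hypothesis Hmin : forall h m, inX b beta h -> L_is b h m -> l <= m.

Lemma minimizer_continuous t : 0 < t < b -> continuous g t.
Proof. intros Ht. apply (ex_derive_continuous g). exists (dg t). auto. Qed.

Lemma minimizer_continuous_derive t : 0 < t < b -> continuous dg t.
Proof.
intros Ht. apply (continuous_continuous_on (fun t => 0 < t <= b)); [|exact Hdgc].
apply (filter_imp (fun x => 0 < x < b)); [intros; lra|exact (locally_between 0 b t Ht)].
Qed.

Section TestFunction.

Variables (s0 t0 : R) (phi dphi : R -> R).
Hypothesis Hs0 : 0 < s0.
Hypothesis Hst : s0 < t0.
Hypothesis Ht0 : t0 < b.
Hypothesis Hphi : test_fun s0 t0 phi dphi.

Let lagr_gap u x := lagr (g x + u * phi x) (dg x + u * dphi x) - lagr (g x) (dg x).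
Let variation u := RInt (lagr_gap u) s0 t0.

Lemma phi_continuous x : continuous phi x.
Proof. destruct Hphi as [Hd _]. apply (ex_derive_continuous phi). exists (dphi x). auto. Qed.

Lemma perturbation_pos_near : exists e, 0 < e /\
  forall u x, Rabs u < e -> s0 <= x <= t0 -> 0 < g x + u * phi x.
Proof.
apply exists_pos_perturbation; [lra| |intros; apply Hpos; lra].
intros x Hx. split; [apply minimizer_continuous; lra|apply phi_continuous].
Qed.

Section Perturbation.

Variable u : R.
Hypothesis Hu : forall x, s0 <= x <= t0 -> 0 < g x + u * phi x.

Lemma perturbation_pos x : 0 < x <= b -> 0 < g x + u * phi x.
Proof.
intros Hx. destruct Hphi as (_ & _ & Hsupp).
destruct (Rle_or_lt s0 x); destruct (Rle_or_lt x t0); try (apply Hu; lra);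
  rewrite (proj1 (Hsupp x ltac:(lra))), Rmult_0_r, Rplus_0_r; apply Hpos; lra.
Qed.

Lemma is_derive_perturbation x : 0 < x < b ->
  is_derive (fun y => g y + u * phi y) x (dg x + u * dphi x).
Proof.
intros Hx. destruct Hphi as [Hd _].
apply (is_derive_plus g (fun y => u * phi y)); [auto|apply is_derive_scal; auto].
Qed.

Lemma continuous_lagr_gap x : s0 <= x <= t0 -> continuous (lagr_gap u) x.
Proof.
intros Hx. destruct Hphi as (_ & Hdc & _).
assert (Hgx : continuous g x) by (apply minimizer_continuous; lra).
assert (Hdgx : continuous dg x) by (apply minimizer_continuous_derive; lra).
apply (continuous_minus (fun x => lagr (g x + u * phi x) (dg x + u * dphi x))
  (fun x => lagr (g x) (dg x))); apply continuous_comp_2d; auto.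
- apply (continuous_plus g (fun y => u * phi y)); [auto|].
  apply (continuous_scal_r u phi), phi_continuous.
- apply (continuous_plus dg (fun y => u * dphi y)); [auto|apply (continuous_scal_r u dphi), Hdc].
- apply continuity_2d_pt_lagr, Hu, Hx.
- apply continuity_2d_pt_lagr, Hpos; lra.
Qed.

Lemma L_is_perturbation : L_is b (fun x => g x + u * phi x) (l + variation u).
Proof.
assert (Hgap : is_RInt_gen (lagr_gap u) (at_right 0) (at_point b) (variation u)).
{ apply is_RInt_gen_eventually; try typeclasses eauto.
  apply (Filter_prod _ _ _ (fun a => 0 < a < s0) (fun c => c = b)).
  - apply at_right_between. lra.
  - reflexivity.
  - intros a c Ha ->. simpl. apply is_RInt_supported; try lra.
    + intros x Hx. destruct Hphi as (_ & _ & Hsupp). unfold lagr_gap.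
      destruct (Hsupp x Hx) as [-> ->]. rewrite !Rmult_0_r, !Rplus_0_r.
      apply Rminus_diag_eq, eq_refl.
    + apply ex_RInt_R. rewrite Rmin_left, Rmax_right by lra. apply continuous_lagr_gap. }
pose proof (is_RInt_gen_plus _ _ _ _ HL Hgap) as Hsum.
change (plus l (variation u)) with (l + variation u) in Hsum.
unfold L_is. refine (is_RInt_gen_ext _ _ _ _ Hsum).
apply (Filter_prod _ _ _ (fun a => 0 < a < b) (fun c => c = b)).
- apply at_right_between. lra.
- reflexivity.
- intros a c Ha -> x Hx. simpl in Hx. rewrite Rmin_left, Rmax_right in Hx by lra.
  rewrite (Lintegrand_derive g dg x), (Lintegrand_derive _ (fun x => dg x + u * dphi x) x)
    by (apply Hg || apply is_derive_perturbation; lra).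
  change (lagr (g x) (dg x) + (lagr (g x + u * phi x) (dg x + u * dphi x) - lagr (g x) (dg x))
    = lagr (g x + u * phi x) (dg x + u * dphi x)). ring.
Qed.

Lemma inX_perturbation : inX b beta (fun x => g x + u * phi x).
Proof.
destruct Hphi as (Hd & Hdc & Hsupp).
split; [|split; [|split; [exact perturbation_pos|split; [|split]]]].
- apply continuous_on_plus_continuous; [exact Hgc|].
  intros x. apply (continuous_scal_r u phi), phi_continuous.
- exists (fun x => dg x + u * dphi x). split; [exact is_derive_perturbation|split].
  + destruct (Hsupp b ltac:(lra)) as [Hb0 Hdb0]. rewrite Hdb0, Rmult_0_r, Rplus_0_r.
    apply (filterlim_ext_loc (fun t => (g t - g b) / (t - b))); [|exact Hg_left].
    unfold at_left, within. apply (filter_imp (fun t => t0 < t < b + 1));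
      [|apply (locally_between t0 (b + 1) b); lra].
    intros t Ht Htb. destruct (Hsupp t ltac:(lra)) as [Ht0' _].
    rewrite Ht0', Hb0, !Rmult_0_r, !Rplus_0_r. reflexivity.
  + apply continuous_on_plus_continuous; [exact Hdgc|].
    intros x. apply (continuous_scal_r u dphi), Hdc.
- destruct (Hsupp 0 ltac:(lra)) as [-> _]. rewrite Hg0. ring.
- destruct (Hsupp b ltac:(lra)) as [-> _]. rewrite Hgb. ring.
- exists (l + variation u). exact L_is_perturbation.
Qed.

End Perturbation.

Lemma variation_0 : variation 0 = 0.
Proof.
unfold variation, lagr_gap. apply RInt_vanishing. intros x _.
rewrite !Rmult_0_l, !Rplus_0_r. apply Rminus_diag_eq, eq_refl.
Qed.

Lemma is_derive_lagr_gap u x : 0 < g x + u * phi x ->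
  is_derive (fun z => lagr_gap z x) u
    (lagr_y (g x + u * phi x) (dg x + u * dphi x) * phi x
     + lagr_p (g x + u * phi x) (dg x + u * dphi x) * dphi x).
Proof.
intros Hx.
pose proof (is_derive_minus _ _ u _ _ (is_derive_lagr_line (g x) (dg x) (phi x) (dphi x) u Hx)
  (is_derive_const (lagr (g x) (dg x)) u)) as Hd.
erewrite <- minus_zero_r. exact Hd.
Qed.

Lemma continuity_2d_pt_derive_lagr_gap t : s0 <= t <= t0 ->
  continuity_2d_pt (fun u v => Derive (fun z => lagr_gap z v) u) 0 t.
Proof.
intros Ht. destruct Hphi as (_ & Hdc & _).
assert (Hline : continuity_2d_pt (fun u v => g v + u * phi v) 0 t).
{ apply continuity_2d_pt_line; [apply minimizer_continuous|apply phi_continuous]; lra. }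
assert (Hdline : continuity_2d_pt (fun u v => dg v + u * dphi v) 0 t).
{ apply continuity_2d_pt_line; [apply minimizer_continuous_derive; lra|apply Hdc]. }
assert (Hpos0 : 0 < g t + 0 * phi t) by (rewrite Rmult_0_l, Rplus_0_r; apply Hpos; lra).
apply continuity_2d_pt_ext_loc with (fun u v =>
  lagr_y (g v + u * phi v) (dg v + u * dphi v) * phi v
  + lagr_p (g v + u * phi v) (dg v + u * dphi v) * dphi v).
- apply (locally_2d_impl (fun u v => 0 < g v + u * phi v)); [|apply continuity_2d_pt_pos; auto].
  apply locally_2d_forall. intros u v Huv. symmetry.
  apply is_derive_unique, is_derive_lagr_gap, Huv.
- apply continuity_2d_pt_plus; apply continuity_2d_pt_mult.
  + apply continuity_2d_pt_comp; auto. apply continuity_2d_pt_lagr_y, Hpos0.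
  + apply continuity_2d_pt_snd, phi_continuous.
  + apply continuity_2d_pt_comp; auto. apply continuity_2d_pt_lagr_p, Hpos0.
  + apply continuity_2d_pt_snd, Hdc.
Qed.

Lemma is_derive_variation e : 0 < e ->
  (forall u x, Rabs u < e -> s0 <= x <= t0 -> 0 < g x + u * phi x) ->
  is_derive variation 0
    (RInt (fun x => lagr_y (g x) (dg x) * phi x + lagr_p (g x) (dg x) * dphi x) s0 t0).
Proof.
intros He Hu.
assert (Hnear : locally 0 (fun u => Rabs u < e)).
{ apply (filter_imp (fun u => - e < u < e)); [intros; apply Rabs_def1; lra|].
  apply (locally_between (- e) e 0); lra. }
assert (Hin : forall x, Rmin s0 t0 <= x <= Rmax s0 t0 -> s0 <= x <= t0)
  by (intros x; rewrite Rmin_left, Rmax_right; lra).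
rewrite (RInt_ext_R _ (fun x => Derive (fun u => lagr_gap u x) 0)).
2: { intros x Hx. rewrite Rmin_left, Rmax_right in Hx by lra.
     assert (Hx0 : 0 < g x + 0 * phi x) by (rewrite Rmult_0_l, Rplus_0_r; apply Hpos; lra).
     pose proof (is_derive_lagr_gap 0 x Hx0) as Hd. rewrite !Rmult_0_l, !Rplus_0_r in Hd.
     symmetry. apply is_derive_unique, Hd. }
apply is_derive_RInt_param.
- apply (filter_imp (fun u => Rabs u < e)); [|exact Hnear]. intros u Hu' x Hx.
  eexists. apply is_derive_lagr_gap, Hu, Hin; auto.
- intros t Ht. apply continuity_2d_pt_derive_lagr_gap, Hin, Ht.
- apply (filter_imp (fun u => Rabs u < e)); [|exact Hnear]. intros u Hu'. apply ex_RInt_R.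
  intros x Hx. apply continuous_lagr_gap; auto.
Qed.

Lemma first_variation :
  RInt (fun x => lagr_y (g x) (dg x) * phi x + lagr_p (g x) (dg x) * dphi x) s0 t0 = 0.
Proof.
destruct perturbation_pos_near as (e & He & Hu).
apply (is_derive_local_min variation 0 _ e He (is_derive_variation e He Hu)).
intros u Hu'. rewrite variation_0, Rminus_0_r in *.
pose proof (Hmin _ _ (inX_perturbation u (fun x => Hu u x Hu'))
  (L_is_perturbation u (fun x => Hu u x Hu'))). lra.
Qed.
End TestFunction.

Lemma minimizer_euler_lagrange t : 0 < t < b ->
  is_derive (fun x => lagr_p (g x) (dg x)) t (lagr_y (g t) (dg t)).
Proof.
intros Ht.
assert (Hcomp : forall F : R -> R -> R, (forall Y P, 0 < Y -> continuity_2d_pt F Y P) ->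
          forall x, 0 < x < b -> continuous (fun x => F (g x) (dg x)) x).
{ intros F HF x Hx. apply continuous_comp_2d;
    [apply minimizer_continuous, Hx|apply minimizer_continuous_derive, Hx|apply HF, Hpos; lra]. }
apply (du_bois_reymond 0 b (fun x => lagr_y (g x) (dg x)) (fun x => lagr_p (g x) (dg x))).
- apply Hcomp, continuity_2d_pt_lagr_y.
- apply Hcomp, continuity_2d_pt_lagr_p.
- intros s t' phi dphi Hs Hst Ht' Hphi. apply first_variation; auto.
- exact Ht.
Qed.

End FirstVariation.

(** * The Euler-Lagrange equation and its first integral *)

Definition slope_sin (p : R) : R := p / sqrt (1 + p ^ 2).

Lemma sqrt_1_plus_sqr p : 0 < sqrt (1 + p ^ 2) /\ sqrt (1 + p ^ 2) * sqrt (1 + p ^ 2) = 1 + p ^ 2.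
Proof. split; [apply sqrt_lt_R0|apply sqrt_sqrt]; nra. Qed.

Lemma slope_sin_lt p q : p < q -> slope_sin p < slope_sin q.
Proof.
intros Hpq.
apply (incr_function slope_sin m_infty p_infty (fun p => / ((1 + p ^ 2) * sqrt (1 + p ^ 2))));
  try easy; intros x _ _; destruct (sqrt_1_plus_sqr x) as [Hw Hww].
- unfold slope_sin. auto_derive; replace (x * (x * 1)) with (x ^ 2) by ring; [repeat split; nra|].
  set (w := sqrt (1 + x ^ 2)) in *. rewrite <- Hww. field_simplify; [|lra..].
  replace (x ^ 2) with (w * w - 1) by lra. field. lra.
- apply Rinv_0_lt_compat, Rmult_lt_0_compat; nra.
Qed.

Lemma one_minus_slope_sin_sqr p : 1 - slope_sin p ^ 2 = / (1 + p ^ 2).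
Proof.
unfold slope_sin. destruct (sqrt_1_plus_sqr p) as [Hw Hww].
set (w := sqrt (1 + p ^ 2)) in *. rewrite <- Hww. field_simplify; [|lra..].
replace (p ^ 2) with (w * w - 1) by lra. field. lra.
Qed.

Lemma slope_sin_lagr_p y p : 0 < y -> slope_sin p = sqrt y * lagr_p y p.
Proof.
intros Hy. unfold slope_sin, lagr_p, lagr. rewrite sqrt_div by nra.
assert (0 < sqrt y) by (apply sqrt_lt_R0; lra).
assert (Hyy : sqrt y * sqrt y = y) by (apply sqrt_sqrt; lra).
destruct (sqrt_1_plus_sqr p) as [Hw _].
set (a := sqrt y) in *. set (w := sqrt (1 + p ^ 2)) in *. clearbody a w.
rewrite <- Hyy. field. lra.
Qed.

Lemma sqrt_lagr_p_derive_eq y p : 0 < y ->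
  p / (2 * sqrt y) * lagr_p y p + sqrt y * lagr_y y p = - / (2 * y * sqrt (1 + p ^ 2)).
Proof.
intros Hy. unfold lagr_y, lagr_p, lagr. rewrite sqrt_div by nra.
assert (0 < sqrt y) by (apply sqrt_lt_R0; lra).
assert (Hyy : sqrt y * sqrt y = y) by (apply sqrt_sqrt; lra).
destruct (sqrt_1_plus_sqr p) as [Hw Hww].
set (a := sqrt y) in *. set (w := sqrt (1 + p ^ 2)) in *. clearbody a w.
rewrite <- Hyy. field_simplify; [|lra..]. replace (p ^ 2) with (w * w - 1) by lra. field. lra.
Qed.

Section EulerLagrange.

Variables (b : R) (g dg : R -> R).
Hypothesis Hpos : forall t, 0 < t < b -> 0 < g t.
Hypothesis Hg : forall t, 0 < t < b -> is_derive g t (dg t).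
Hypothesis Hel : forall t, 0 < t < b ->
  is_derive (fun x => lagr_p (g x) (dg x)) t (lagr_y (g t) (dg t)).

Lemma is_derive_slope_sin t : 0 < t < b ->
  is_derive (fun x => slope_sin (dg x)) t (- / (2 * g t * sqrt (1 + dg t ^ 2))).
Proof.
intros Ht.
apply is_derive_ext_loc with (fun x => sqrt (g x) * lagr_p (g x) (dg x)).
{ apply (filter_imp (fun x => 0 < x < b)); [|apply locally_between, Ht].
  intros x Hx. symmetry. apply slope_sin_lagr_p, Hpos, Hx. }
rewrite <- sqrt_lagr_p_derive_eq by apply Hpos, Ht.
apply (is_derive_mult (fun x => sqrt (g x)) (fun x => lagr_p (g x) (dg x)));
  [|apply Hel, Ht|intros; apply Rmult_comm].
apply is_derive_sqrt; [apply Hg, Ht|apply Hpos, Ht].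
Qed.

Lemma derive_decreasing s t : 0 < s -> s < t -> t < b -> dg t < dg s.
Proof.
intros Hs Hst Htb.
assert (Hq : slope_sin (dg t) < slope_sin (dg s)).
{ apply Ropp_lt_cancel.
  apply (incr_function (fun x => - slope_sin (dg x)) 0 b
    (fun x => / (2 * g x * sqrt (1 + dg x ^ 2)))); try (simpl; lra).
  - intros x Hx1 Hx2. simpl in Hx1, Hx2. rewrite <- (Ropp_involutive (/ _)).
    apply (is_derive_opp (fun x => slope_sin (dg x))), is_derive_slope_sin; lra.
  - intros x Hx1 Hx2. specialize (Hpos x (conj Hx1 Hx2)). destruct (sqrt_1_plus_sqr (dg x)).
    apply Rinv_0_lt_compat, Rmult_lt_0_compat; lra. }
destruct (Rlt_or_le (dg t) (dg s)) as [|[Hlt|Heq]]; auto.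
- apply slope_sin_lt in Hlt. lra.
- rewrite Heq in Hq. lra.
Qed.

(* [g (1 + g'^2) = g / (1 - slope_sin g' ^ 2)] is differentiable although [g'] need not be. *)
Lemma energy_const s t : 0 < s < b -> 0 < t < b ->
  g s * (1 + dg s ^ 2) = g t * (1 + dg t ^ 2).
Proof.
assert (E : forall x, g x * (1 + dg x ^ 2) = g x / (1 - slope_sin (dg x) ^ 2)).
{ intros x. rewrite one_minus_slope_sin_sqr. field. nra. }
intros Hs Ht. rewrite !E.
apply (is_derive_zero_const (fun x => g x / (1 - slope_sin (dg x) ^ 2)) 0 b); auto.
intros x Hx. assert (Hgx := Hpos x Hx). destruct (sqrt_1_plus_sqr (dg x)) as [Hw Hww].
assert (Hq := is_derive_slope_sin x Hx).
pose (q := fun y => slope_sin (dg y)).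
change (is_derive q x (- / (2 * g x * sqrt (1 + dg x ^ 2)))) in Hq.
change (is_derive (fun y => g y / (1 - q y ^ 2)) x 0).
assert (Hqx : q x = dg x / sqrt (1 + dg x ^ 2)) by reflexivity.
assert (Hq2 : 1 - q x ^ 2 = / (1 + dg x ^ 2)) by apply one_minus_slope_sin_sqr.
clearbody q.
auto_derive.
- repeat split; [exists (dg x); apply Hg, Hx|eexists; exact Hq|].
  replace (1 + - (q x * (q x * 1))) with (1 - q x ^ 2) by ring. rewrite Hq2.
  apply Rgt_not_eq, Rinv_0_lt_compat. nra.
- replace (Derive (fun y => g y) x) with (dg x) by (symmetry; apply is_derive_unique, Hg, Hx).
  replace (Derive (fun y => q y) x) with (- / (2 * g x * sqrt (1 + dg x ^ 2)))
    by (symmetry; apply is_derive_unique, Hq).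
  replace (1 + - (q x * (q x * 1))) with (1 - q x ^ 2) by ring. rewrite Hq2, Hqx.
  set (w := sqrt (1 + dg x ^ 2)) in *. rewrite <- Hww. field. lra.
Qed.

End EulerLagrange.

(** * Shape of the minimizer *)

Lemma unimodal_not_locally_constant (b : R) (g : R -> R) :
  strictly_increasing_on 0 b g \/
  (exists m, 0 < m < b /\ strictly_increasing_on 0 m g /\ strictly_decreasing_on m b g) ->
  forall a c, 0 <= a -> a < c -> c <= b -> ~ (forall t, a <= t <= c -> g t = g a).
Proof.
intros Hshape a c Ha Hac Hc Hconst.
destruct Hshape as [Hi|(m & Hm & Hi & Hd)].
- specialize (Hi a c Ha Hac Hc). rewrite (Hconst c) in Hi by lra. lra.
- destruct (Rlt_or_le a m).
  + specialize (Hi a (Rmin c m) Ha ltac:(apply Rmin_glb_lt; lra) (Rmin_r _ _)).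
    rewrite (Hconst (Rmin c m)) in Hi; [lra|split; [apply Rmin_glb; lra|apply Rmin_l]].
  + specialize (Hd a c ltac:(lra) Hac Hc). rewrite (Hconst c) in Hd by lra. lra.
Qed.

Section Shape.

Variables (b : R) (g dg : R -> R).
Hypothesis Hb : 0 < b.
Hypothesis Hgc : continuous_on (fun t => 0 <= t <= b) g.
Hypothesis Hpos : forall t, 0 < t < b -> 0 < g t.
Hypothesis Hg0 : g 0 = 0.
Hypothesis Hg : forall t, 0 < t < b -> is_derive g t (dg t).
Hypothesis Hdgc : forall t, 0 < t < b -> continuous dg t.
Hypothesis Hdec : forall s t, 0 < s -> s < t -> t < b -> dg t < dg s.
Hypothesis Henergy : forall s t, 0 < s < b -> 0 < t < b ->
  g s * (1 + dg s ^ 2) = g t * (1 + dg t ^ 2).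

Lemma derive_to_p_infty : filterlim dg (at_right 0) (Rbar_locally p_infty).
Proof.
intros P [M HM].
set (h := b / 2). assert (Hh : 0 < h < b) by (unfold h; lra).
set (c := g h * (1 + dg h ^ 2)).
assert (Hc : 0 < c) by (specialize (Hpos h Hh); unfold c; nra).
set (K := Rmax M (Rabs (dg h)) + 1).
assert (HK : M < K /\ - K < dg h) by (unfold K; pose proof (Rmax_l M (Rabs (dg h)));
  pose proof (Rmax_r M (Rabs (dg h))); pose proof (Rle_abs (- dg h)); rewrite Rabs_Ropp in *; lra).
assert (HcK : 0 < c / (1 + K ^ 2)) by (apply Rdiv_lt_0_compat; nra).
destruct (continuous_on_near (fun t => 0 <= t <= b) g 0 _ HcK ltac:(lra) Hgc) as (d & Hd & Hnear).
unfold filtermap. apply (filter_imp (fun x => 0 < x < Rmin d h)).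
2: { apply at_right_between, Rmin_glb_lt; lra. }
intros x Hx. apply HM. pose proof (Rmin_l d h). pose proof (Rmin_r d h).
assert (Hgx : g x < c / (1 + K ^ 2)).
{ assert (Hx' : Rabs (g x - g 0) < c / (1 + K ^ 2))
    by (apply Hnear; [|rewrite Rminus_0_r, Rabs_pos_eq]; lra).
  rewrite Hg0, Rminus_0_r in Hx'. exact (Rle_lt_trans _ _ _ (Rle_abs _) Hx'). }
assert (HE : g x * (1 + dg x ^ 2) = c) by (apply Henergy; lra).
assert (Hsq : K ^ 2 < dg x ^ 2).
{ assert (Hgx0 : 0 < g x) by (apply Hpos; lra).
  apply (Rmult_lt_reg_l (g x)); [exact Hgx0|].
  assert (g x * (1 + K ^ 2) < c); [|nra].
  apply (Rmult_lt_reg_r (/ (1 + K ^ 2))); [apply Rinv_0_lt_compat; nra|].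
  rewrite Rmult_assoc, Rinv_r by nra. lra. }
assert (dg h < dg x) by (apply Hdec; lra).
nra.
Qed.

Lemma exists_critical_point x : 0 < x < b -> dg x <= 0 -> exists m, 0 < m <= x /\ dg m = 0.
Proof.
intros Hx Hdx. destruct Hdx as [Hdx|Hdx]; [|exists x; split; [lra|exact Hdx]].
destruct (locally_R 0 _ (derive_to_p_infty (fun y => 0 < y) ltac:(exists 0; auto)))
  as (d & Hd & Hnear).
set (x1 := Rmin d x / 2).
assert (Hx1 : 0 < x1 < x /\ x1 < d)
  by (assert (0 < Rmin d x) by (apply Rmin_glb_lt; lra);
      pose proof (Rmin_l d x); pose proof (Rmin_r d x); unfold x1; lra).
assert (Hdx1 : 0 < dg x1) by (apply Hnear; [rewrite Rminus_0_r, Rabs_pos_eq|]; lra).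
destruct (IVT_interv (fun y => - dg y) x1 x) as (m & Hm & Hm0); try lra.
- intros y Hy. apply continuity_pt_filterlim, (continuous_opp dg), Hdgc. lra.
- exists m. split; lra.
Qed.

Lemma shape_around_critical m : 0 < m < b -> dg m = 0 ->
  strictly_increasing_on 0 m g /\ strictly_decreasing_on m b g.
Proof.
intros Hm Hdm. split.
- apply (strictly_increasing_on_derive g dg); try lra.
  + apply (continuous_on_subinterval g 0 b); [lra..|exact Hgc].
  + intros x Hx. apply Hg. lra.
  + intros x Hx. rewrite <- Hdm. apply Hdec; lra.
- apply (strictly_decreasing_on_derive g dg); try lra.
  + apply (continuous_on_subinterval g 0 b); [lra..|exact Hgc].
  + intros x Hx. apply Hg. lra.
  + intros x Hx. rewrite <- Hdm. apply Hdec; lra.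
Qed.

Lemma unimodal_shape : strictly_increasing_on 0 b g \/
  exists m, 0 < m < b /\ strictly_increasing_on 0 m g /\ strictly_decreasing_on m b g.
Proof.
destruct (classic (exists x, 0 < x < b /\ dg x <= 0)) as [(x & Hx & Hdx)|Hnone].
- right. destruct (exists_critical_point x Hx Hdx) as (m & Hm & Hdm).
  exists m. split; [lra|apply shape_around_critical; auto; lra].
- left. apply (strictly_increasing_on_derive g dg); auto.
  intros x Hx. apply Rnot_le_lt. intros Hdx. apply Hnone. exists x. auto.
Qed.

End Shape.

Theorem proposition3 (b beta : R) (g : R -> R) :
  0 < b -> 0 < beta -> is_minimizer b beta g ->
  (* (a) *)
  filterlim (Derive g) (at_right 0) (Rbar_locally p_infty) /\
  (* (b) *)
  (forall a c, 0 <= a -> a < c -> c <= b ->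
     ~ (forall t, a <= t <= c -> g t = g a)) /\
  (* (c) *)
  (forall t1 t2, 0 < t1 < b -> 0 < t2 < b ->
     Derive g t1 = 0 -> Derive g t2 = 0 -> t1 = t2) /\
  (forall t, 0 < t < b -> Derive g t = 0 ->
     forall s, 0 <= s <= b -> g s <= g t) /\
  (* (d) *)
  (strictly_increasing_on 0 b g \/
   exists m, 0 < m < b /\ strictly_increasing_on 0 m g /\
             strictly_decreasing_on m b g) /\
  (* (e) *)
  (forall s t, 0 < s -> s < t -> t < b -> Derive g t < Derive g s).
Proof.
intros Hb _ [HX [l [HL Hmin]]].
destruct HX as (Hgc & [dg (Hg & Hleft & Hdgc)] & Hpos & Hg0 & Hgb & _).
assert (Hpos' : forall t, 0 < t < b -> 0 < g t) by (intros t Ht; apply Hpos; lra).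
assert (Hdgc' : forall t, 0 < t < b -> continuous dg t)
  by (intros; eapply minimizer_continuous_derive; eauto).
assert (Hel := minimizer_euler_lagrange b beta l g dg Hb Hgc Hg Hleft Hdgc Hpos Hg0 Hgb HL Hmin).
assert (Hdec := derive_decreasing b g dg Hpos' Hg Hel).
assert (Henergy := energy_const b g dg Hpos' Hg Hel).
assert (HDer : forall t, 0 < t < b -> Derive g t = dg t)
  by (intros; apply is_derive_unique, Hg; auto).
assert (Hshape := unimodal_shape b g dg Hb Hgc Hpos' Hg0 Hg Hdgc' Hdec Henergy).
split; [|split; [|split; [|split; [|split]]]].
- apply (filterlim_ext_loc dg); [|exact (derive_to_p_infty b g dg Hb Hgc Hpos' Hg0 Hdec Henergy)].
  apply (filter_imp (fun x => 0 < x < b)); [|apply at_right_between; lra].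
  intros x Hx. symmetry. apply HDer, Hx.
- exact (unimodal_not_locally_constant b g Hshape).
- intros t1 t2 Ht1 Ht2 E1 E2. rewrite HDer in E1, E2 by auto.
  destruct (Rtotal_order t1 t2) as [Hlt|[Heq|Hgt]]; auto.
  + specialize (Hdec t1 t2 ltac:(lra) Hlt ltac:(lra)). lra.
  + specialize (Hdec t2 t1 ltac:(lra) Hgt ltac:(lra)). lra.
- intros t Ht E s Hs. rewrite HDer in E by auto.
  destruct (shape_around_critical b g dg Hgc Hg Hdec t Ht E) as [Hi Hd].
  destruct (Rtotal_order s t) as [Hlt|[->|Hgt]]; [left; apply Hi|right|left; apply Hd]; lra.
- exact Hshape.
- intros s t Hs Hst Ht. rewrite !HDer by lra. apply Hdec; auto.
Qed.
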